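(* Let $q\ge5$ be a prime power and let $\mathcal{C}_\mathscr{C}$ be the $[q+1,q-3,5]_q$ code with parity check matrix whose columns are the vectors $(1,t,t^2,t^3)$, $t\in\mathbb{F}_q$, and $(0,0,0,1)$. All weight-$1$ cosets $\mathcal{V}^{(1)}$ of $\mathcal{C}_\mathscr{C}$ have the same weight distribution, namely $B_0(\mathcal{V}^{(1)})=B_2(\mathcal{V}^{(1)})=B_3(\mathcal{V}^{(1)})=0$, $B_1(\mathcal{V}^{(1)})=1$, $B_4(\mathcal{V}^{(1)})=\binom{q}{4}$, and for $w\ge5$ $$B_w(\mathcal{V}^{(1)})=A_w(\mathcal{C}_\mathscr{C})+(-1)^{w}\left(\binom{q+1}{w}\binom{w-1}{3}-\binom{q}{w-1}\binom{w-2}{2}\right).$$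
   Context: A coset of a linear code $\mathcal{C}\subseteq\mathbb{F}_q^n$ is a set $\mathbf{v}+\mathcal{C}$; its weight is the minimum Hamming weight of its vectors. $B_w(\mathcal{V})$ is the number of vectors of Hamming weight $w$ in the coset $\mathcal{V}$, and $A_w(\mathcal{C}_\mathscr{C})$ is the number of codewords of Hamming weight $w$ in $\mathcal{C}_\mathscr{C}$. *)

From HB Require Import structures.
From mathcomp Require Import all_boot all_order all_algebra all_field.
Set Implicit Arguments. Unset Strict Implicit. Unset Printing Implicit Defensive.
Import GRing.Theory.
Local Open Scope ring_scope.

(* Coordinates of F_q^(q+1) are indexed by [option F]:
   [Some t] <-> column (1,t,t^2,t^3), [None] <-> column (0,0,0,1). *)
Definition word (F : finFieldType) := {ffun option F -> F}.

Definition pcol (F : finFieldType) (i : option F) (k : 'I_4) : F :=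
  match i with
  | Some t => t ^+ k
  | None => ((k : nat) == 3%N)%:R
  end.

Definition hwt (F : finFieldType) (v : word F) : nat := #|[set i | v i != 0]|.

Definition codeC (F : finFieldType) : {set word F} :=
  [set c : word F | [forall k : 'I_4, \sum_(i : option F) pcol i k * c i == 0]].

Definition coset (F : finFieldType) (v : word F) : {set word F} :=
  [set u : word F | u - v \in codeC F].

(* Weight of a (nonempty) set of vectors = minimum Hamming weight of its
   elements; the seed q+1 = #|option F| is an upper bound of all weights,
   so it does not affect the minimum for nonempty sets such as cosets. *)
Definition set_weight (F : finFieldType) (V : {set word F}) : nat :=
  \big[minn/#|{: option F}|]_(u in V) hwt u.

Definition Bw (F : finFieldType) (V : {set word F}) (w : nat) : nat :=
  #|[set u in V | hwt u == w]|.
Definition Aw (F : finFieldType) (w : nat) : nat := Bw (codeC F) w.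

(* Index the q+1 coordinates by I = F + {oo}; let s be the syndrome of a
   weight-one coset leader u0 with support {j}, and for T <= I let N_s(T) be the
   number of words of syndrome s supported in T.  Any four columns of the
   parity-check matrix are independent, so for |T| >= 4 the syndrome map on
   words supported in T is onto and N_s(T) = N_0(T), while for |T| <= 3 the only
   candidates are u0 and 0 respectively.  Hence N_s(T) - N_0(T) is
   -[|T| <= 3 and j \notin T].  Moebius inversion on the subset lattice turns
   this into the difference of the numbers of words with support exactly S, a
   truncated alternating binomial sum in |S \ {j}|, and summing over the S of
   size w gives B_w - A_w in closed form. *)

From HB Require Import structures.
From mathcomp Require Import all_boot all_order all_algebra all_field.
From mathcomp Require Import ring.
Import GRing.Theory.
Local Open Scope ring_scope.
Set Implicit Arguments. Unset Strict Implicit. Unset Printing Implicit Defensive.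

Lemma sum_sign_bin_prefix (R : pzRingType) n k :
  \sum_(t < k.+1) (-1) ^+ t *+ 'C(n.+1, t) = (-1) ^+ k *+ 'C(n, k) :> R.
Proof.
elim: k => [|k IH]; first by rewrite big_ord1 !bin0.
by rewrite big_ord_recr /= IH binS mulrnDr exprS mulN1r !mulNrn addrCA subrr addr0.
Qed.

Section SubsetLattice.
Variables (T : finType) (R : pzRingType).

Lemma sum_sign_interval (A B : {set T}) : A \subset B ->
  \sum_(X : {set T} | (X \subset B) && (A \subset X)) (-1) ^+ (#|B| - #|X|)
    = (A == B)%:R :> R.
Proof.
move=> sAB; move gap: (#|B| - #|A|)%N => n.
elim: n A B gap sAB => [|n IH] A B gap sAB.
  have -> : A = B by apply/eqP; rewrite eqEcard sAB -subn_eq0 gap.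
  rewrite eqxx (eq_bigl (pred1 B)) ?big_pred1_eq ?subnn // => X /=.
  by rewrite eqEsubset.
have neAB : A != B by apply: contra_eqN gap => /eqP ->; rewrite subnn.
have [x] : exists x, x \in B :\: A.
  by apply/set0Pn; rewrite -card_gt0 cardsD (setIidPr sAB) gap.
rewrite inE => /andP[xA xB].
have cardB : #|B| = #|B :\ x|.+1 by rewrite (cardsD1 x B) xB.
rewrite (bigID (fun X : {set T} => x \in X)) /=.
rewrite (eq_bigl (fun X : {set T} => (X \subset B) && (x |: A \subset X))); last first.
  by move=> X; rewrite subUset sub1set; case: (x \in X); rewrite ?andbT ?andbF.
rewrite IH ?subUset ?sub1set ?xB //; last by rewrite cardsU1 xA add1n subnS gap.
rewrite (eq_bigl (fun X : {set T} => (X \subset B :\ x) && (A \subset X))); last first.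
  by move=> X; rewrite subsetD1; case: (x \in X); rewrite ?andbT ?andbF.
rewrite (eq_bigr (fun X : {set T} => - (-1) ^+ (#|B :\ x| - #|X|))); last first.
  by move=> X /andP[sXB _]; rewrite cardB subSn ?subset_leq_card // exprS mulN1r.
rewrite sumrN IH ?subsetD1 ?sAB //; last first.
  by move: gap; rewrite cardB subSn ?subset_leq_card ?subsetD1 ?sAB // => -[].
have -> : (x |: A == B) = (A == B :\ x).
  by apply/eqP/eqP => [<-|->]; [rewrite setU1K | rewrite setD1K].
by rewrite subrr (negPf neAB).
Qed.

Lemma subset_mobius (f : {set T} -> R) (S : {set T}) :
  \sum_(X : {set T} | X \subset S)
    (-1) ^+ (#|S| - #|X|) * \sum_(Y : {set T} | Y \subset X) f Y = f S.
Proof.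
under eq_bigr => X _ do rewrite big_distrr.
rewrite (exchange_big_dep (fun Y : {set T} => Y \subset S)) /=; last first.
  by move=> X Y sXS sYX; apply: subset_trans sYX sXS.
rewrite (bigD1 S) //= [X in _ + X]big1 ?addr0 => [|Y /andP[sYS neYS]];
  by rewrite -mulr_suml sum_sign_interval ?(negPf neYS) ?eqxx ?mul1r ?mul0r.
Qed.

Lemma sum_sign_small_subsets (D : {set T}) k :
  \sum_(X : {set T} | (X \subset D) && (#|X| <= k)%N) (-1) ^+ #|X|
    = \sum_(t < k.+1) (-1) ^+ t *+ 'C(#|D|, t) :> R.
Proof.
rewrite (partition_big (fun X : {set T} => inord #|X| : 'I_k.+1) xpredT) //=.
apply: eq_bigr => t _.
rewrite (eq_bigl [in [set X : {set T} | X \subset D & #|X| == t]]); last first.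
  move=> X; rewrite inE -andbA; congr (_ && _).
  apply/andP/eqP => [[leXk /eqP <-]|cardX]; first by rewrite inordK.
  by rewrite cardX -ltnS ltn_ord; split; last by apply/eqP/val_inj; rewrite /= inordK.
rewrite (eq_bigr (fun _ => (-1) ^+ t)); last by move=> X; rewrite inE => /andP[_ /eqP ->].
by rewrite sumr_const cards_draws.
Qed.

Lemma card_draws_notin (j : T) k :
  #|[set S : {set T} | (#|S| == k) && (j \notin S)]| = 'C(#|T|.-1, k).
Proof.
rewrite -(cardsC1 j) -cards_draws; apply: eq_card => S.
by rewrite !inE subsetC sub1set inE andbC.
Qed.

Lemma card_draws_in (j : T) k :
  #|[set S : {set T} | (#|S| == k.+1) && (j \in S)]| = 'C(#|T|.-1, k).
Proof.
have cardT : #|T| = #|T|.-1.+1 by rewrite prednK //; apply/card_gt0P; exists j.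
apply: (@addIn 'C(#|T|.-1, k.+1)); rewrite [RHS]addnC -binS -cardT -card_draws.
rewrite -(card_draws_notin j).
rewrite -(cardsID [set S : {set T} | j \in S] [set S : {set T} | #|S| == k.+1]).
by congr (_ + _)%N; apply: eq_card => S; rewrite !inE // andbC.
Qed.

End SubsetLattice.

Section Syndrome.
Variable F : finFieldType.
Local Notation I := (option F).
Implicit Types (u v c : word F) (s : {ffun 'I_4 -> F}) (S T : {set I}).

Definition synd u : {ffun 'I_4 -> F} := [ffun k => \sum_(i : I) pcol i k * u i].

Lemma syndB u v : synd (u - v) = synd u - synd v.
Proof.
apply/ffunP => k; rewrite !ffunE -sumrB.
by apply: eq_bigr => i _; rewrite !ffunE mulrBr.
Qed.

Lemma synd0 : synd 0 = 0.
Proof. by rewrite -(subrr (0 : word F)) syndB subrr. Qed.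

Definition supp (u : word F) : {set I} := [set i | u i != 0].

Lemma hwtE u : hwt u = #|supp u|.
Proof. by []. Qed.

Lemma supp0 : supp 0 = set0.
Proof. by apply/setP => i; rewrite !inE ffunE eqxx. Qed.

Lemma suppD u v : supp (u + v) \subset supp u :|: supp v.
Proof.
apply/subsetP => i; rewrite !inE ffunE; apply: contraR.
by rewrite negb_or !negbK => /andP[/eqP-> /eqP->]; rewrite addr0.
Qed.

Lemma suppN u : supp (- u) = supp u.
Proof. by apply/setP => i; rewrite !inE ffunE oppr_eq0. Qed.

Lemma card_suppB u v : (#|supp (u - v)%R| <= #|supp u| + #|supp v|)%N.
Proof.
rewrite -(suppN v); apply: leq_trans (leq_card_setU _ _).
exact: subset_leq_card (suppD _ _).
Qed.

Lemma in_codeC c : (c \in codeC F) = (synd c == 0).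
Proof.
rewrite inE; apply/forallP/eqP => [c0|c0 k].
  by apply/ffunP => k; rewrite !ffunE; apply/eqP.
by move/ffunP: c0 => /(_ k); rewrite !ffunE => ->.
Qed.

Lemma in_coset v u : (u \in coset v) = (synd u == synd v).
Proof. by rewrite inE in_codeC syndB subr_eq0. Qed.

Lemma synd_pairing (u : word F) (p : {poly F}) :
  \sum_(k < 4) p`_k * synd u k = \sum_(i : I) u i * \sum_(k < 4) p`_k * pcol i k.
Proof.
under eq_bigr do rewrite ffunE big_distrr.
rewrite exchange_big; apply: eq_bigr => i _; rewrite big_distrr.
by apply: eq_bigr => k _ /=; rewrite mulrA mulrC.
Qed.

Lemma sum_coef_pcol_Some (p : {poly F}) t :
  (size p <= 4)%N -> \sum_(k < 4) p`_k * pcol (Some t) k = p.[t].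
Proof. by move=> p4; rewrite (horner_coef_wide _ p4). Qed.

Lemma sum_coef_pcol_None (p : {poly F}) : \sum_(k < 4) p`_k * pcol None k = p`_3.
Proof. by rewrite !big_ord_recr big_ord0 /= !mulr0 !add0r mulr1. Qed.

(* Pairing the syndrome with the coefficients of p = prod (X - t) over the other
   finite support points isolates c(t0) p(t0); the column at infinity meets the
   X^3 coefficient, which vanishes since then at most two such points remain. *)
Lemma codeword_small_eq0 c : (hwt c <= 4)%N -> synd c = 0 -> c = 0.
Proof.
move=> small c0.
have cSome t0 : c (Some t0) = 0.
  apply/eqP/negbNE/negP => ct0.
  pose Q := [pred t | (Some t \in supp c) && (t != t0)].
  pose p := \prod_(t <- enum Q) ('X - t%:P).
  have size_p : ((None \in supp c) + size p <= 4)%N.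
    rewrite size_prod_XsubC -cardE; apply: leq_trans small; rewrite hwtE.
    rewrite (cardsD1 None) (cardsD1 (Some t0) (supp c :\ None)) !inE ct0 /=.
    rewrite leq_add2l add1n ltnS -(card_imset _ Some_inj); apply: subset_leq_card.
    apply/subsetP => _ /imsetP[t /andP[ct tt0] ->]; rewrite !inE.
    by move: ct; rewrite inE => ->; rewrite (inj_eq Some_inj) tt0.
  have p4 : (size p <= 4)%N by apply: leq_trans size_p; apply: leq_addl.
  have p_t0 : p.[t0] != 0.
    by rewrite -rootE root_prod_XsubC mem_enum inE eqxx andbF.
  suff : c (Some t0) * p.[t0] = 0 by move/eqP; rewrite mulf_eq0 (negPf ct0) (negPf p_t0).
  transitivity (\sum_(k < 4) p`_k * synd c k); last first.
    by rewrite c0 big1 // => k _; rewrite ffunE mulr0.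
  rewrite synd_pairing (bigD1 (Some t0)) // sum_coef_pcol_Some //= [X in _ + X]big1 ?addr0 //.
  move=> [t|] ne.
    have [->|ct] := eqVneq (c (Some t)) 0; first by rewrite mul0r.
    rewrite sum_coef_pcol_Some // (rootP _) ?mulr0 // root_prod_XsubC mem_enum.
    by rewrite inE inE ct; apply: contra ne => /eqP->.
  have [->|cN] := eqVneq (c None) 0; first by rewrite mul0r.
  by rewrite sum_coef_pcol_None nth_default ?mulr0 //; move: size_p; rewrite inE cN.
apply/ffunP => -[t|]; rewrite ffunE ?cSome //.
move/ffunP: c0 => /(_ (inord 3)); rewrite !ffunE (bigD1 None) //= big1 => [|[t|] //].
  by rewrite addr0 inordK // mul1r.
by rewrite cSome mulr0.
Qed.

Lemma synd_inj_small u v : (hwt u + hwt v <= 4)%N -> synd u = synd v -> u = v.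
Proof.
move=> small suv; apply/eqP; rewrite -subr_eq0; apply/eqP/codeword_small_eq0.
  exact: leq_trans (card_suppB u v) small.
by rewrite syndB suv subrr.
Qed.

Lemma supp_subB (T : {set I}) u v :
  supp v \subset T -> (supp (u - v) \subset T) = (supp u \subset T).
Proof.
move=> vT; have sub_T x : supp x \subset T -> supp (x + v) \subset T.
  by move=> xT; apply: subset_trans (suppD x v) _; rewrite subUset xT.
apply/idP/idP => [/sub_T|uT]; first by rewrite subrK.
by apply: subset_trans (suppD u (- v)) _; rewrite subUset uT suppN vT.
Qed.

Lemma synd_onto_large (T : {set I}) s :
  (4 <= #|T|)%N -> exists2 u, supp u \subset T & synd u = s.
Proof.
move=> T4; pose e (k : 'I_4) : I := enum_val (widen_ord T4 k).
have e_inj : injective e by move=> k1 k2 /enum_val_inj /(congr1 val) /= /val_inj.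
pose spread (x : {ffun 'I_4 -> F}) : word F :=
  [ffun i => \sum_(k < 4) (e k == i)%:R * x k].
have spreadB x y : spread x - spread y = spread (x - y).
  apply/ffunP => i; rewrite !ffunE -sumrB; apply: eq_bigr => k _.
  by rewrite !ffunE mulrBr.
have spreadE x k : spread x (e k) = x k.
  rewrite ffunE (bigD1 k) //= eqxx mul1r big1 ?addr0 // => k' nek.
  by rewrite (inj_eq e_inj) (negPf nek) mul0r.
have supp_spread x : supp (spread x) \subset e @: 'I_4.
  apply/subsetP => i; rewrite inE; apply: contraR => /imsetP ne_i.
  rewrite ffunE big1 // => k _; have [eki|] := eqVneq (e k) i; last by rewrite mul0r.
  by case: ne_i; exists k.
have synd_spread_inj : injective (synd \o spread).
  move=> x y /= sxy; have /ffunP spread0 : spread (x - y) = 0.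
    apply: codeword_small_eq0; last by rewrite -spreadB syndB sxy subrr.
    rewrite hwtE (leq_trans (subset_leq_card (supp_spread _))) //.
    by rewrite (leq_trans (leq_imset_card _ _)) ?card_ord.
  apply/ffunP => k; apply/eqP; rewrite -subr_eq0.
  by move: (spread0 (e k)); rewrite spreadE !ffunE => ->.
have [g _ gK] := injF_bij synd_spread_inj.
exists (spread (g s)); last exact: gK.
apply: subset_trans (supp_spread _) _.
by apply/subsetP => _ /imsetP[k _ ->]; apply: enum_valP.
Qed.

Definition nwords_sub (s : {ffun 'I_4 -> F}) (T : {set I}) : int :=
  \sum_(u : word F | (supp u \subset T) && (synd u == s)) 1.

Definition nwords_supp (s : {ffun 'I_4 -> F}) (S : {set I}) : int :=
  \sum_(u : word F | (supp u == S) && (synd u == s)) 1.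

Lemma nwords_sub_supp s T :
  nwords_sub s T = \sum_(S : {set I} | S \subset T) nwords_supp s S.
Proof.
rewrite /nwords_sub (partition_big supp (fun S : {set I} => S \subset T)) /=.
  apply: eq_bigr => S ST; apply: eq_bigl => u.
  by case: (supp u =P S) => [->|_]; rewrite ?ST ?andbT ?andbF.
by move=> u /andP[].
Qed.

Lemma nwords_sub_large s T : (4 <= #|T|)%N -> nwords_sub s T = nwords_sub 0 T.
Proof.
move=> T4; have [u1 u1T <-] := synd_onto_large s T4.
rewrite /nwords_sub [RHS](reindex_inj (addIr (- u1))) /=.
by apply: eq_bigl => u; rewrite supp_subB // syndB subr_eq0.
Qed.

Lemma nwords_sub_small u0 T :
  (hwt u0 + #|T| <= 4)%N -> nwords_sub (synd u0) T = (supp u0 \subset T)%:R.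
Proof.
move=> small; rewrite /nwords_sub (eq_bigl (fun u => (u == u0) && (supp u0 \subset T))).
  case: (supp u0 \subset T); last by rewrite big_pred0 // => u; rewrite andbF.
  by rewrite (eq_bigl (pred1 u0)) ?big_pred1_eq // => u; rewrite andbT.
move=> u; apply/andP/andP => [[uT /eqP su]|[/eqP-> u0T]]; last by rewrite u0T eqxx.
suff eu : u = u0 by rewrite -eu eqxx.
apply: synd_inj_small su; rewrite addnC; apply: leq_trans small.
by rewrite leq_add2l hwtE subset_leq_card.
Qed.

Lemma nwords_sub_diff u0 j T : supp u0 = [set j] ->
  nwords_sub (synd u0) T - nwords_sub 0 T = - ((#|T| <= 3)%N && (j \notin T))%:R.
Proof.
move=> u0j; have [T3|T4] := leqP #|T| 3; last by rewrite nwords_sub_large ?subrr.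
rewrite -synd0 !nwords_sub_small ?hwtE ?supp0 ?sub0set ?u0j ?sub1set ?cards0 ?cards1 //.
  by case: (j \in T); rewrite /= ?subrr ?sub0r ?oppr0.
exact: leq_trans T3 _.
Qed.

Lemma nwords_supp_diff u0 j S : supp u0 = [set j] -> (2 <= #|S|)%N ->
  nwords_supp (synd u0) S - nwords_supp 0 S = (-1) ^+ #|S| *+ 'C(#|S :\ j|.-1, 3).
Proof.
move=> u0j S2; rewrite -(subset_mobius (fun X => nwords_supp (synd u0) X - nwords_supp 0 X)).
under eq_bigr => X _ do
  rewrite sumrB -!nwords_sub_supp (nwords_sub_diff _ u0j) mulrN mulr_natr mulrb.
rewrite sumrN -big_mkcondr /=.
rewrite (eq_bigl (fun X : {set I} => (X \subset S :\ j) && (#|X| <= 3)%N)) => [|X]; last first.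
  by rewrite subsetD1; case: (j \in X); rewrite ?andbT ?andbF.
rewrite (eq_bigr (fun X : {set I} => (-1) ^+ #|S| * (-1) ^+ #|X|)) => [|X /andP[XSj _]].
  have Sj : #|S :\ j| = #|S :\ j|.-1.+1.
    by rewrite prednK // -ltnS (leq_trans S2) // (cardsD1 j S) -add1n leq_add2r leq_b1.
  rewrite -mulr_sumr sum_sign_small_subsets Sj sum_sign_bin_prefix -Sj.
  by rewrite mulrnAr -mulNrn -mulrN exprS expr2 !mulN1r opprK mulr1.
have XS := subset_trans XSj (subD1set S j).
by rewrite -signr_odd oddB ?subset_leq_card // signr_addb !signr_odd.
Qed.

Definition nweight s (w : nat) : nat :=
  #|[set u : word F | (synd u == s) && (hwt u == w)]|.

Lemma Bw_cosetE v w : Bw (coset v) w = nweight (synd v) w.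
Proof. by apply: eq_card => u; rewrite [in LHS]in_set [in RHS]in_set in_coset. Qed.

Lemma AwE w : Aw F w = nweight 0 w.
Proof. by apply: eq_card => u; rewrite [in LHS]in_set [in RHS]in_set in_codeC. Qed.

Lemma nweight_small u0 w : (hwt u0 + w <= 4)%N -> nweight (synd u0) w = (hwt u0 == w).
Proof.
move=> small; have uniq u : synd u = synd u0 -> hwt u = w -> u = u0.
  by move=> su wu; apply: synd_inj_small su; rewrite wu addnC.
have [w_u0|ne] := eqVneq (hwt u0) w.
  apply/eqP/cards1P; exists u0; apply/setP => u; rewrite !inE.
  by apply/andP/eqP => [[/eqP su /eqP wu]|->]; [exact: uniq | rewrite w_u0 !eqxx].
apply/eqP; rewrite cards_eq0; apply/eqP/setP => u; rewrite !inE.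
by apply/negP => /andP[/eqP su /eqP wu]; move: ne; rewrite -wu (uniq u su wu) eqxx.
Qed.

Lemma nweight_supp_sum s w :
  (nweight s w)%:Z = \sum_(S : {set I} | #|S| == w) nwords_supp s S.
Proof.
rewrite -natz -sumr_const (partition_big supp (fun S : {set I} => #|S| == w)) /=.
  apply: eq_bigr => S /eqP cardS; apply: eq_bigl => u; rewrite inE hwtE.
  by case: (supp u =P S) => [->|_]; rewrite ?cardS ?eqxx ?andbT ?andbF.
by move=> u; rewrite inE => /andP[_].
Qed.

Lemma nweight_diff u0 j w : supp u0 = [set j] -> (2 <= w)%N ->
  (nweight (synd u0) w)%:Z - (nweight 0 w)%:Z
    = (-1) ^+ w * (('C(#|F|.+1, w) * 'C(w.-1, 3))%:Z - ('C(#|F|, w.-1) * 'C(w - 2, 2))%:Z).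
Proof.
move=> u0j; case: w => [|[|m]] // _.
rewrite !nweight_supp_sum -sumrB.
rewrite (bigID (fun S : {set I} => j \in S)) /=.
have in_term S : (#|S| == m.+2) && (j \in S) ->
    nwords_supp (synd u0) S - nwords_supp 0 S = (-1) ^+ m.+2 *+ 'C(m, 3).
  move=> /andP[/eqP cardS jS].
  have cardSj : #|S :\ j| = m.+1 by move: cardS; rewrite (cardsD1 j S) jS add1n => -[].
  by apply: eq_trans (nwords_supp_diff u0j _) _; rewrite cardS ?cardSj.
have out_term S : (#|S| == m.+2) && (j \notin S) ->
    nwords_supp (synd u0) S - nwords_supp 0 S = (-1) ^+ m.+2 *+ 'C(m.+1, 3).
  move=> /andP[/eqP cardS jS].
  have cardSj : #|S :\ j| = m.+2 by rewrite -cardS (cardsD1 j S) (negPf jS).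
  by apply: eq_trans (nwords_supp_diff u0j _) _; rewrite cardS ?cardSj.
rewrite (eq_bigr _ in_term) (eq_bigr _ out_term) !sumr_const.
have cardF : #|F| = #|{: I}|.-1 by rewrite card_option.
have -> : #|(fun S : {set I} => (#|S| == m.+2) && (j \in S))| = 'C(#|F|, m.+1).
  by rewrite cardF -(card_draws_in j); apply: eq_card => S; rewrite inE.
have -> : #|(fun S : {set I} => (#|S| == m.+2) && (j \notin S))| = 'C(#|F|, m.+2).
  by rewrite cardF -(card_draws_notin j); apply: eq_card => S; rewrite inE.
by rewrite (binS #|F| m.+1) (binS m 2) subn2 /= !PoszM !PoszD; ring.
Qed.

Lemma set_weight_attained (V : {set word F}) :
  (set_weight V < #|{: I}|)%N -> exists2 u, u \in V & hwt u = set_weight V.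
Proof.
move=> below_seed.
have [seedV|//] : set_weight V = #|{: I}| \/ exists2 u, u \in V & hwt u = set_weight V.
  apply: (big_ind (fun y => y = _ \/ exists2 u, u \in V & hwt u = y)) => [|a b|u uV].
  - by left.
  - by case: leqP.
  - by right; exists u.
by rewrite seedV ltnn in below_seed.
Qed.

End Syndrome.

Unset Implicit Arguments.

Theorem theorem4p2 (F : finFieldType) (q : nat) (hq : #|F| = q) (hq5 : (5 <= q)%N)
  (v : word F) (hv : set_weight (coset v) = 1%N) :
  [/\ Bw (coset v) 0 = 0%N /\ Bw (coset v) 2 = 0%N /\ Bw (coset v) 3 = 0%N,
      Bw (coset v) 1 = 1%N, Bw (coset v) 4 = 'C(q, 4) &
      forall w : nat, (5 <= w)%N ->
        (Bw (coset v) w)%:Z =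
          (Aw F w)%:Z + (-1) ^+ w *
            (('C(q.+1, w) * 'C(w.-1, 3))%:Z - ('C(q, w.-1) * 'C(w - 2, 2))%:Z)].
Proof.
have [|u0 u0V] := @set_weight_attained _ (coset v); rewrite hv.
  by rewrite card_option hq ltnS (leq_trans _ hq5).
move=> wt_u0.
have [j u0j] : exists j, supp u0 = [set j] by apply/cards1P; rewrite -hwtE wt_u0.
have synd_v : synd v = synd u0 by move: u0V; rewrite in_coset => /eqP.
have B_small w : (w <= 3)%N -> Bw (coset v) w = (w == 1%N).
  by move=> w3; rewrite Bw_cosetE synd_v nweight_small wt_u0 // eq_sym.
have B_diff w : (2 <= w)%N -> (Bw (coset v) w)%:Z - (Aw F w)%:Z = (-1) ^+ w *
    (('C(q.+1, w) * 'C(w.-1, 3))%:Z - ('C(q, w.-1) * 'C(w - 2, 2))%:Z).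
  by rewrite Bw_cosetE AwE synd_v -hq; exact: nweight_diff u0j.
have A4 : Aw F 4 = 0%N by rewrite AwE -synd0 nweight_small // hwtE supp0 cards0.
split; [by rewrite !B_small | by rewrite B_small | |].
  apply/eqP; rewrite -eqz_nat; apply/eqP; have := B_diff 4%N isT; rewrite A4 subr0 => ->.
  by rewrite -signr_odd (binS q 3) subn2 /= !binn !muln1 expr0 mul1r PoszD addrK.
by move=> w w5; rewrite -(B_diff w) ?(leq_trans _ w5) // addrC subrK.
Qed.
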